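(* If $0\le r\le b-1$ then $\mathrm{Var}(\mu^{(r)})=r(1+b-r)$.
   Context: Fix an integer $b\ge2$. For $n\in\mathbb{N}$ with base-$b$ digits $n_k$, $s(n):=\sum_kn_k$. For $r,n\in\mathbb{N}$, $\Delta^{(r)}(n):=s(n+r)-s(n)$, and $\mu^{(r)}(d):=\lim_{N\to\infty}\frac1N|\{n<N:\Delta^{(r)}(n)=d\}|$ for $d\in\mathbb{Z}$; these limits exist and $\mu^{(r)}$ is a probability measure on $\mathbb{Z}$ with finite moments. $\mathrm{Var}(\mu^{(r)})$ is its variance. *)

From Stdlib Require Import Reals Lra Lia ZArith Arith List.
From Coquelicot Require Import Coquelicot.
Open Scope R_scope.

(* Base-b digit sum s(n), computed with fuel (n steps always suffice when b >= 2). *)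
Fixpoint digsum_fuel (b k n : nat) : nat :=
  match k with
  | O => O
  | S k' => (n mod b + digsum_fuel b k' (n / b))%nat
  end.

Definition s (b n : nat) : nat := digsum_fuel b n n.

Definition Delta (b r n : nat) : Z := (Z.of_nat (s b (n + r)) - Z.of_nat (s b n))%Z.

Definition count_Delta (b r : nat) (d : Z) (N : nat) : nat :=
  length (filter (fun n => Z.eqb (Delta b r n) d) (seq 0 N)).

(* mu^{(r)}(d) = lim_{N -> oo} (1/N) |{ n < N : Delta^{(r)}(n) = d }|
   (Coquelicot's total limit operator; the limit exists). *)
Definition mu (b r : nat) (d : Z) : R :=
  real (Lim_seq (fun N => INR (count_Delta b r d N) / INR N)).

Definition sumZ (f : Z -> R) : R :=
  Series (fun n => f (Z.of_nat n)) + Series (fun n => f (- Z.of_nat n - 1)%Z).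

Definition meanZ (m : Z -> R) : R := sumZ (fun d => IZR d * m d).
Definition varZ (m : Z -> R) : R :=
  sumZ (fun d => (IZR d - meanZ m) ^ 2 * m d).

From Pilot Require Import Defs.
From Stdlib Require Import Reals Lra Lia ZArith List.
From Coquelicot Require Import Coquelicot.
Open Scope R_scope.

(* Adding r <= b - 1 to n in base b produces c carries, each of which lowers the
   digit sum by b - 1, so Delta^(r)(n) = r - (b - 1) c.  The first carry happens
   iff the last digit is >= b - r, and further carries happen exactly while the
   next digits equal b - 1; hence, digit by digit, {c = k} has density (b - r)/b
   for k = 0 and (r/b) ((b - 1)/b) b^(1-k) for k >= 1, with bounded counting
   error.  Summing these weighted geometric series gives E c = r/(b - 1) and
   E c^2 = r (b + 1)/(b - 1)^2, so mu^(r) has mean 0 and variance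
   r^2 - 2 r^2 + r (b + 1) = r (1 + b - r). *)

Lemma div_mod_digit (b q a : nat) :
  (a < b)%nat -> ((b * q + a) / b = q /\ (b * q + a) mod b = a)%nat.
Proof.
  intros Ha; split; symmetry;
    [apply (Nat.div_unique _ _ _ a) | apply (Nat.mod_unique _ _ q)]; lia.
Qed.

Section FuelRecursion.

Variables (b : nat) (G : nat -> nat -> nat) (F : nat -> nat -> nat).
Hypothesis b_gt1 : (1 < b)%nat.
Hypothesis G_0 : G 0%nat 0%nat = 0%nat.
Hypothesis F_0 : forall n, F 0%nat n = 0%nat.
Hypothesis F_S : forall f n, F (S f) n = G (n mod b) (F f (n / b)).

Lemma fuel_at_zero f : F f 0 = 0%nat.
Proof.
  induction f as [|f IH]; [apply F_0|].
  now rewrite F_S, Nat.Div0.mod_0_l, Nat.Div0.div_0_l, IH.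
Qed.

Lemma fuel_irrelevance f1 f2 n : (n <= f1)%nat -> (n <= f2)%nat -> F f1 n = F f2 n.
Proof.
  revert f2 n; induction f1 as [|f1 IH]; intros f2 n H1 H2.
  - replace n with 0%nat by lia. now rewrite !fuel_at_zero.
  - destruct f2 as [|f2]; [replace n with 0%nat by lia; now rewrite !fuel_at_zero|].
    rewrite !F_S. f_equal.
    destruct n as [|n]; [rewrite Nat.Div0.div_0_l, !fuel_at_zero; reflexivity|].
    assert (S n / b < S n)%nat by (apply Nat.div_lt; lia).
    apply IH; lia.
Qed.

Lemma fuel_diag_unfold n : F n n = G (n mod b) (F (n / b) (n / b)).
Proof.
  destruct n as [|n].
  - now rewrite Nat.Div0.mod_0_l, Nat.Div0.div_0_l, F_0.
  - rewrite F_S. f_equal. apply fuel_irrelevance; [|lia].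
    assert (S n / b < S n)%nat by (apply Nat.div_lt; lia). lia.
Qed.

End FuelRecursion.

Lemma s_unfold b n : (1 < b)%nat -> s b n = (n mod b + s b (n / b))%nat.
Proof.
  intros Hb. exact (fuel_diag_unfold b (fun a x => a + x)%nat (digsum_fuel b) Hb
    eq_refl (fun _ => eq_refl) (fun _ _ => eq_refl) n).
Qed.

Lemma s_digit b q a : (1 < b)%nat -> (a < b)%nat -> s b (b * q + a) = (a + s b q)%nat.
Proof.
  intros Hb Ha. destruct (div_mod_digit b q a Ha) as [Hq Ha'].
  now rewrite s_unfold, Hq, Ha'.
Qed.

Fixpoint trailing_fuel (b f m : nat) : nat :=
  match f with
  | O => O
  | S f => if Nat.eqb (m mod b) (b - 1) then S (trailing_fuel b f (m / b)) else O
  end.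

Definition trailing b m := trailing_fuel b m m.

(* Number of carries in the base-b addition n + r, for r <= b - 1. *)
Definition carries (b r n : nat) : nat :=
  if Nat.ltb (n mod b + r) b then O else S (trailing b (n / b)).

Lemma carries_unfold b r n : (1 < b)%nat ->
  carries b r n = if Nat.ltb (n mod b + r) b then O else S (carries b 1 (n / b)).
Proof.
  intros Hb. unfold carries at 1. destruct (Nat.ltb _ _); [reflexivity|]. f_equal.
  set (m := (n / b)%nat).
  unfold trailing. rewrite (fuel_diag_unfold b
    (fun a x => if Nat.eqb a (b - 1) then S x else O) (trailing_fuel b) Hb);
    try reflexivity.
  - unfold carries. assert (m mod b < b)%nat by (apply Nat.mod_upper_bound; lia).
    destruct (Nat.eqb_spec (m mod b) (b - 1)), (Nat.ltb_spec (m mod b + 1) b);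
      reflexivity || lia.
  - destruct (Nat.eqb_spec 0 (b - 1)); lia.
Qed.

Lemma carries_digit_sum b : (1 < b)%nat -> forall n r, (r <= b - 1)%nat ->
  (s b (n + r) + (b - 1) * carries b r n = s b n + r)%nat.
Proof.
  intros Hb n. induction n as [n IH] using lt_wf_ind. intros r Hr.
  rewrite carries_unfold by lia.
  set (q := (n / b)%nat). set (a := (n mod b)%nat).
  assert (Ha : (a < b)%nat) by (apply Nat.mod_upper_bound; lia).
  assert (Hn : n = (b * q + a)%nat) by apply Nat.div_mod_eq.
  clearbody q a. subst n. rewrite s_digit by lia.
  destruct (Nat.ltb_spec (a + r) b).
  - replace (b * q + a + r)%nat with (b * q + (a + r))%nat by lia.
    rewrite s_digit by lia. lia.
  - replace (b * q + a + r)%nat with (b * (q + 1) + (a + r - b))%nat by nia.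
    rewrite s_digit by lia.
    assert (Hq : (q < b * q + a)%nat) by nia.
    specialize (IH q Hq 1%nat ltac:(lia)). nia.
Qed.

Lemma Delta_carries b r n : (1 < b)%nat -> (r <= b - 1)%nat ->
  Defs.Delta b r n = (Z.of_nat r - Z.of_nat (b - 1) * Z.of_nat (carries b r n))%Z.
Proof.
  intros Hb Hr. unfold Defs.Delta. pose proof (carries_digit_sum b Hb n r Hr). lia.
Qed.

Definition count_below (P : nat -> bool) (N : nat) : nat :=
  length (filter P (seq 0 N)).

Lemma count_below_S P N :
  count_below P (S N) = (count_below P N + if P N then 1 else 0)%nat.
Proof.
  unfold count_below. rewrite seq_S, filter_app, length_app.
  simpl. destruct (P N); simpl; lia.
Qed.

Lemma count_below_ext P Q N : (forall n, P n = Q n) -> count_below P N = count_below Q N.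
Proof. intros H. unfold count_below. now rewrite (filter_ext P Q H). Qed.

Lemma count_below_le P N : (count_below P N <= N)%nat.
Proof. induction N; [reflexivity|]. rewrite count_below_S. destruct (P N); lia. Qed.

Lemma count_below_lt K N : count_below (fun a => Nat.ltb a K) N = Nat.min N K.
Proof.
  induction N; [reflexivity|]. rewrite count_below_S, IHN.
  destruct (Nat.ltb_spec N K); lia.
Qed.

Lemma count_below_ge K N : count_below (fun a => Nat.leb K a) N = (N - K)%nat.
Proof.
  induction N; [reflexivity|]. rewrite count_below_S, IHN.
  destruct (Nat.leb_spec K N); lia.
Qed.

Section DigitSplit.

Variables (b : nat) (p q : nat -> bool).

Let split_pred n := (p (n mod b) && q (n / b))%bool.

Lemma count_below_split_partial m j : (j <= b)%nat ->
  count_below split_pred (b * m) = (count_below p b * count_below q m)%nat ->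
  count_below split_pred (b * m + j) =
  (count_below p b * count_below q m + if q m then count_below p j else 0)%nat.
Proof.
  intros Hj Hm. induction j as [|j IH].
  - rewrite Nat.add_0_r, Hm. change (count_below p 0) with 0%nat. destruct (q m); lia.
  - rewrite Nat.add_succ_r, !count_below_S, IH by lia.
    unfold split_pred. destruct (div_mod_digit b m j ltac:(lia)) as [-> ->].
    destruct (q m), (p j); simpl; lia.
Qed.

Lemma count_below_split m :
  count_below split_pred (b * m) = (count_below p b * count_below q m)%nat.
Proof.
  induction m as [|m IH]; [rewrite Nat.mul_0_r; symmetry; apply Nat.mul_0_r|].
  replace (b * S m)%nat with (b * m + b)%nat by lia.
  rewrite (count_below_split_partial m b (le_n b) IH), count_below_S.
  destruct (q m); lia.
Qed.

End DigitSplit.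

Definition density_O1 (P : nat -> bool) (a : R) : Prop :=
  exists C, forall N, Rabs (INR (count_below P N) - INR N * a) <= C.

Lemma density_O1_ext P Q a a' :
  (forall n, P n = Q n) -> a = a' -> density_O1 P a -> density_O1 Q a'.
Proof.
  intros H <- [C HC]. exists C. intros N. now rewrite <- (count_below_ext P Q N H).
Qed.

Lemma density_O1_true : density_O1 (fun _ => true) 1.
Proof.
  exists 0. intros N.
  replace (count_below (fun _ => true) N) with N.
  - rewrite Rmult_1_r, Rminus_diag, Rabs_R0. lra.
  - induction N; [reflexivity|]. rewrite count_below_S. lia.
Qed.

Lemma density_O1_split b (p q : nat -> bool) a : (0 < b)%nat -> density_O1 q a ->
  density_O1 (fun n => andb (p (n mod b)) (q (n / b)%nat)) (INR (count_below p b) / INR b * a).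
Proof.
  intros Hb [C HC]. exists (INR b * C + INR b + INR b * Rabs a). intros N.
  set (m := (N / b)%nat). set (j := (N mod b)%nat).
  assert (Hj : (j < b)%nat) by (apply Nat.mod_upper_bound; lia).
  assert (HN : N = (b * m + j)%nat) by apply Nat.div_mod_eq.
  clearbody m j. subst N.
  rewrite (count_below_split_partial b p q m j ltac:(lia) (count_below_split b p q m)).
  specialize (HC m).
  assert (HC0 : 0 <= C) by (eapply Rle_trans; [apply Rabs_pos | exact HC]).
  assert (Hb0 : 0 < INR b) by (apply lt_0_INR; lia).
  set (P := count_below p b).
  assert (HP : 0 <= INR P <= INR b) by (split; [apply pos_INR | apply le_INR, count_below_le]).
  set (X := if q m then count_below p j else 0%nat).
  assert (HX : 0 <= INR X <= INR b).
  { split; [apply pos_INR|]. apply le_INR. unfold X.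
    destruct (q m); [pose proof (count_below_le p j)|]; lia. }
  assert (Hjb : 0 <= INR j <= INR b) by (split; [apply pos_INR | apply le_INR; lia]).
  assert (Hratio : 0 <= INR P / INR b <= 1).
  { split; [apply Rdiv_le_0_compat; lra|].
    apply Rmult_le_reg_r with (INR b); [lra|]. field_simplify; lra. }
  rewrite !plus_INR, !mult_INR.
  replace (INR P * INR (count_below q m) + INR X - (INR b * INR m + INR j) * (INR P / INR b * a))
    with (INR P * (INR (count_below q m) - INR m * a) + (INR X - INR j * (INR P / INR b) * a))
    by (field; lra).
  assert (Hmain : Rabs (INR P * (INR (count_below q m) - INR m * a)) <= INR b * C).
  { rewrite Rabs_mult, (Rabs_pos_eq (INR P)) by lra.
    apply Rmult_le_compat; [lra | apply Rabs_pos | lra | exact HC]. }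
  assert (Hrest : Rabs (INR X - INR j * (INR P / INR b) * a) <= INR b + INR b * Rabs a).
  { eapply Rle_trans; [apply Rabs_triang|].
    rewrite Rabs_Ropp, !Rabs_mult, (Rabs_pos_eq (INR X)), (Rabs_pos_eq (INR j)),
      (Rabs_pos_eq (INR P / INR b)) by lra.
    assert (Hjr : INR j * (INR P / INR b) <= INR b) by nra.
    pose proof (Rmult_le_compat_r (Rabs a) _ _ (Rabs_pos a) Hjr). lra. }
  pose proof (Rabs_triang (INR P * (INR (count_below q m) - INR m * a))
    (INR X - INR j * (INR P / INR b) * a)).
  lra.
Qed.

Lemma density_O1_limit P a : density_O1 P a ->
  is_lim_seq (fun N => INR (count_below P N) / INR N) a.
Proof.
  intros [C HC].
  assert (Hinv : is_lim_seq (fun N => C * / INR N) 0).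
  { replace (Finite 0) with (Rbar_mult C (Rbar_inv p_infty)) by (simpl; f_equal; ring).
    apply is_lim_seq_scal_l, is_lim_seq_inv; [apply is_lim_seq_INR | discriminate]. }
  apply is_lim_seq_le_le_loc with (fun N => a - C * / INR N) (fun N => a + C * / INR N).
  - exists 1%nat. intros N HN.
    assert (HN0 : 0 < INR N) by (apply lt_0_INR; lia).
    specialize (HC N). apply Rabs_le_between in HC.
    replace (INR (count_below P N) / INR N)
      with (a + (INR (count_below P N) - INR N * a) * / INR N) by (field; lra).
    pose proof (Rinv_0_lt_compat _ HN0). nra.
  - replace (Finite a) with (Rbar_minus a 0) by (simpl; f_equal; ring).
    apply is_lim_seq_minus'; [apply is_lim_seq_const | exact Hinv].
  - replace (Finite a) with (Rbar_plus a 0) by (simpl; f_equal; ring).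
    apply is_lim_seq_plus'; [apply is_lim_seq_const | exact Hinv].
Qed.

Fixpoint carry_density (b r k : nat) : R :=
  match k with
  | O => INR (b - r) / INR b
  | S k => INR r / INR b * carry_density b 1 k
  end.

Lemma density_O1_carries b : (1 < b)%nat -> forall k r, (r <= b - 1)%nat ->
  density_O1 (fun n => Nat.eqb (carries b r n) k) (carry_density b r k).
Proof.
  intros Hb k. induction k as [|k IH]; intros r Hr.
  - apply (density_O1_ext (fun n => andb (Nat.ltb (n mod b) (b - r)) true)
      _ (INR (count_below (fun a => Nat.ltb a (b - r)) b) / INR b * 1)).
    + intros n. rewrite (carries_unfold b r n Hb).
      destruct (Nat.ltb_spec (n mod b) (b - r)), (Nat.ltb_spec (n mod b + r) b);
        reflexivity || lia.
    + rewrite count_below_lt, Nat.min_r by lia. simpl. ring.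
    + apply (density_O1_split b (fun a => Nat.ltb a (b - r)) (fun _ => true));
        [lia | exact density_O1_true].
  - apply (density_O1_ext
      (fun n => andb (Nat.leb (b - r) (n mod b)) (Nat.eqb (carries b 1 (n / b)) k))
      _ (INR (count_below (fun a => Nat.leb (b - r) a) b) / INR b * carry_density b 1 k)).
    + intros n. rewrite (carries_unfold b r n Hb).
      destruct (Nat.leb_spec (b - r) (n mod b)), (Nat.ltb_spec (n mod b + r) b);
        reflexivity || lia.
    + rewrite count_below_ge. replace (b - (b - r))%nat with r by lia. reflexivity.
    + apply (density_O1_split b (fun a => Nat.leb (b - r) a) (fun m => Nat.eqb (carries b 1 m) k));
        [lia|].
      apply IH. lia.
Qed.

Lemma count_Delta_carries b r d N : (1 < b)%nat -> (r <= b - 1)%nat ->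
  count_Delta b r d N = count_below (fun n =>
    Z.eqb (Z.of_nat r - Z.of_nat (b - 1) * Z.of_nat (carries b r n)) d) N.
Proof.
  intros Hb Hr. apply (count_below_ext (fun n => Z.eqb (Defs.Delta b r n) d)).
  intros n. now rewrite Delta_carries.
Qed.

Lemma mu_lattice b r k : (1 < b)%nat -> (r <= b - 1)%nat ->
  mu b r (Z.of_nat r - Z.of_nat (b - 1) * Z.of_nat k)%Z = carry_density b r k.
Proof.
  intros Hb Hr. unfold mu.
  rewrite (Lim_seq_ext _
    (fun N => INR (count_below (fun n => Nat.eqb (carries b r n) k) N) / INR N)).
  - now rewrite (is_lim_seq_unique _ _ (density_O1_limit _ _ (density_O1_carries b Hb k r Hr))).
  - intros N. rewrite count_Delta_carries by assumption.
    apply (f_equal (fun c => INR c / INR N)), count_below_ext. intros n.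
    destruct (Z.eqb_spec (Z.of_nat r - Z.of_nat (b - 1) * Z.of_nat (carries b r n))
      (Z.of_nat r - Z.of_nat (b - 1) * Z.of_nat k)), (Nat.eqb_spec (carries b r n) k);
      reflexivity || nia.
Qed.

Lemma mu_off_lattice b r d : (1 < b)%nat -> (r <= b - 1)%nat ->
  (forall k, d <> (Z.of_nat r - Z.of_nat (b - 1) * Z.of_nat k)%Z) -> mu b r d = 0.
Proof.
  intros Hb Hr Hd. unfold mu.
  rewrite (Lim_seq_ext _ (fun _ => 0)), Lim_seq_const; [reflexivity|].
  intros N. rewrite count_Delta_carries by assumption.
  rewrite (count_below_ext _ (fun _ => false)).
  - replace (count_below (fun _ => false) N) with 0%nat; [simpl; unfold Rdiv; ring|].
    unfold count_below. induction (seq 0 N); auto.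
  - intros n.
    destruct (Z.eqb_spec (Z.of_nat r - Z.of_nat (b - 1) * Z.of_nat (carries b r n)) d);
      [|reflexivity].
    exfalso. now apply (Hd (carries b r n)).
Qed.

Lemma is_series_zero : is_series (fun _ => 0) 0.
Proof.
  change (is_lim_seq (sum_n (fun _ : nat => 0)) 0).
  apply (is_lim_seq_ext (fun _ => 0)); [|apply is_lim_seq_const].
  intros N. symmetry. exact (sum_n_m_const_zero 0 N).
Qed.

Lemma is_series_lin2 (a1 a2 : nat -> R) (l1 l2 c1 c2 : R) :
  is_series a1 l1 -> is_series a2 l2 ->
  is_series (fun k => c1 * a1 k + c2 * a2 k) (c1 * l1 + c2 * l2).
Proof.
  intros H1 H2. exact (is_series_plus _ _ _ _ (is_series_scal c1 _ _ H1) (is_series_scal c2 _ _ H2)).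
Qed.

Lemma is_series_dilate (g : nat -> R) c l : (0 < c)%nat ->
  (forall n, (n mod c <> 0)%nat -> g n = 0) ->
  is_series (fun k => g (c * k)%nat) l -> is_series g l.
Proof.
  intros Hc Hg Hs.
  assert (Hpart : forall N, sum_n g N = sum_n (fun k => g (c * k)%nat) (N / c)).
  { induction N as [|N IH].
    - rewrite Nat.Div0.div_0_l, !sum_O, Nat.mul_0_r. reflexivity.
    - set (q := (N / c)%nat) in IH. set (a := (N mod c)%nat).
      assert (Ha : (a < c)%nat) by (apply Nat.mod_upper_bound; lia).
      assert (HN : N = (c * q + a)%nat) by apply Nat.div_mod_eq.
      rewrite sum_Sn, IH. destruct (Nat.eq_dec (S a) c) as [Ec | Ec].
      + replace (S N) with (c * S q + 0)%nat by nia.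
        destruct (div_mod_digit c (S q) 0 Hc) as [-> _]. now rewrite sum_Sn, Nat.add_0_r.
      + replace (S N) with (c * q + S a)%nat by lia.
        destruct (div_mod_digit c q (S a) ltac:(lia)) as [-> Emod].
        rewrite Hg by lia. exact (plus_zero_r _). }
  change (is_lim_seq (sum_n g) l).
  apply (is_lim_seq_ext (fun N => sum_n (fun k => g (c * k)%nat) (N / c)));
    [intros N; symmetry; apply Hpart|].
  apply (is_lim_seq_subseq _ _ (fun N => N / c)%nat); [|exact Hs].
  intros P [M HM]. exists (c * M)%nat. intros N HN.
  apply HM, Nat.div_le_lower_bound; lia.
Qed.

Lemma sumZ_shift (f : Z -> R) (r : nat) L :
  (forall d, (Z.of_nat r < d)%Z -> f d = 0) ->
  is_series (fun m => f (Z.of_nat r - Z.of_nat m)%Z) L -> sumZ f = L.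
Proof.
  intros Hf HL. unfold sumZ.
  (* The first r + 1 terms of the series, read backwards, are the terms d >= 0 of sumZ. *)
  set (F := fun m : nat => f (Z.of_nat r - Z.of_nat m)%Z) in HL.
  set (u := fun n : nat => f (Z.of_nat n)).
  assert (Htail : forall k, u (S r + k)%nat = 0) by (intros k; apply Hf; lia).
  assert (Hu : ex_series u).
  { apply (ex_series_incr_n u (S r)). exists 0.
    eapply is_series_ext; [|exact is_series_zero]. intros k. now rewrite Htail. }
  rewrite <- (is_series_unique _ _ HL), (Series_incr_n u (S r)), (Series_incr_n F (S r))
    by (lia || assumption || now exists L).
  rewrite (Series_ext _ (fun _ => 0)), (is_series_unique _ _ is_series_zero) by exact Htail.
  simpl pred. rewrite <- (sum_f_R0_skip u r), (sum_eq _ F), (Series_ext _ (fun k => F (S r + k)%nat)).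
  - ring.
  - intros n. unfold F. f_equal. lia.
  - intros i Hi. unfold u, F. f_equal. lia.
Qed.

Lemma sumZ_lattice (f : Z -> R) (r c : nat) L : (0 < c)%nat ->
  (forall d, (forall k, d <> (Z.of_nat r - Z.of_nat c * Z.of_nat k)%Z) -> f d = 0) ->
  is_series (fun k => f (Z.of_nat r - Z.of_nat c * Z.of_nat k)%Z) L -> sumZ f = L.
Proof.
  intros Hc Hf HL. apply (sumZ_shift f r).
  - intros d Hd. apply Hf. intros k E. nia.
  - apply (is_series_dilate _ c); [exact Hc| |].
    + intros n Hn. apply Hf. intros k E. apply Hn.
      replace n with (k * c)%nat by nia. apply Nat.Div0.mod_mul.
    + eapply is_series_ext; [|exact HL]. intros k. simpl. f_equal. lia.
Qed.

Lemma is_series_recurrence (a u : nat -> R) (q U : R) : q <> 1 -> ex_series a ->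
  is_series u U -> (forall k, a (S k) = q * a k + u k) ->
  is_series a ((a 0%nat + U) / (1 - q)).
Proof.
  intros Hq Ha Hu Hrec.
  assert (HS : Series a = a 0%nat + q * Series a + U).
  { rewrite Series_incr_1 at 1 by exact Ha.
    rewrite (Series_ext _ (fun k => q * a k + u k)) by exact Hrec.
    rewrite Series_plus, Series_scal_l, (is_series_unique _ _ Hu).
    - ring.
    - exact (ex_series_scal_l q a Ha).
    - now exists U. }
  replace ((a 0%nat + U) / (1 - q)) with (Series a).
  - now apply Series_correct.
  - apply (Rmult_eq_reg_r (1 - q)); [|lra]. field_simplify; [lra|lra].
Qed.

Lemma ex_series_pow_geom (e : nat) q : 0 < q < 1 -> ex_series (fun k => INR (S k) ^ e * q ^ k).
Proof.
  intros Hq. apply ex_series_Rabs, (ex_series_DAlembert _ q); [lra| |].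
  - intros n. apply Rmult_integral_contrapositive.
    split; apply pow_nonzero; [apply not_0_INR; lia | lra].
  - apply (is_lim_seq_ext (fun n => (1 + / INR (S n)) ^ e * q)).
    + intros n. assert (HS : 0 < INR (S n)) by (apply lt_0_INR; lia).
      rewrite Rabs_pos_eq.
      * replace (INR (S (S n))) with (INR (S n) * (1 + / INR (S n)))
          by (rewrite (S_INR (S n)); field; lra).
        rewrite Rpow_mult_distr. change (q ^ S n) with (q * q ^ n).
        field. split; apply pow_nonzero; lra.
      * apply Rlt_le, Rdiv_lt_0_compat; apply Rmult_lt_0_compat; apply pow_lt;
          (apply lt_0_INR; lia) || lra.
    + assert (Hinv : is_lim_seq (fun n => / INR (S n)) 0).
      { apply (is_lim_seq_incr_1 (fun n => / INR n)).
        replace (Finite 0) with (Rbar_inv p_infty) by reflexivity.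
        apply is_lim_seq_inv; [apply is_lim_seq_INR | discriminate]. }
      assert (Hpow : is_lim_seq (fun n => (1 + / INR (S n)) ^ e) 1).
      { induction e as [|e IH]; [apply is_lim_seq_const|].
        replace (Finite 1) with (Finite ((1 + 0) * 1)) by (f_equal; ring).
        apply is_lim_seq_mult'; [|exact IH].
        apply is_lim_seq_plus'; [apply is_lim_seq_const | exact Hinv]. }
      replace (Finite q) with (Finite (1 * q)) by (f_equal; ring).
      apply is_lim_seq_mult'; [exact Hpow | apply is_lim_seq_const].
Qed.

Lemma is_series_geom_succ q : 0 < q < 1 ->
  is_series (fun k => INR (S k) * q ^ k) (/ (1 - q) ^ 2).
Proof.
  intros Hq.
  replace (/ (1 - q) ^ 2) with ((INR 1 * q ^ 0 + q * / (1 - q)) / (1 - q))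
    by (simpl; field; lra).
  apply (is_series_recurrence (fun k => INR (S k) * q ^ k) (fun k => q * q ^ k));
    [lra | | |].
  - eapply ex_series_ext; [|exact (ex_series_pow_geom 1 q Hq)].
    intros k. simpl. ring.
  - apply (is_series_scal_l q (fun k => q ^ k) (/ (1 - q))), is_series_geom.
    rewrite Rabs_pos_eq; lra.
  - intros k. rewrite (S_INR (S k)). change (q ^ S k) with (q * q ^ k). ring.
Qed.

Lemma is_series_geom_succ_sq q : 0 < q < 1 ->
  is_series (fun k => INR (S k) ^ 2 * q ^ k) ((1 + q) / (1 - q) ^ 3).
Proof.
  intros Hq.
  replace ((1 + q) / (1 - q) ^ 3)
    with ((INR 1 ^ 2 * q ^ 0 + (2 * q * / (1 - q) ^ 2 + q * / (1 - q))) / (1 - q))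
    by (simpl; field; lra).
  apply (is_series_recurrence (fun k => INR (S k) ^ 2 * q ^ k)
    (fun k => 2 * q * (INR (S k) * q ^ k) + q * q ^ k));
    [lra | apply ex_series_pow_geom, Hq | |].
  - apply is_series_lin2; [now apply is_series_geom_succ|].
    apply is_series_geom. rewrite Rabs_pos_eq; lra.
  - intros k. rewrite (S_INR (S k)). change (q ^ S k) with (q * q ^ k). ring.
Qed.

Lemma is_series_affine_moment (rho : nat -> R) (m0 m1 x y : R) :
  is_series rho m0 -> is_series (fun k => INR k * rho k) m1 ->
  is_series (fun k => (x + y * INR k) * rho k) (x * m0 + y * m1).
Proof.
  intros H0 H1. eapply is_series_ext; [|exact (is_series_lin2 _ _ _ _ x y H0 H1)].
  intros k. simpl. ring.
Qed.

Lemma is_series_square_moment (rho : nat -> R) (m0 m1 m2 x y : R) :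
  is_series rho m0 -> is_series (fun k => INR k * rho k) m1 ->
  is_series (fun k => INR k ^ 2 * rho k) m2 ->
  is_series (fun k => (x + y * INR k) ^ 2 * rho k) (x ^ 2 * m0 + 2 * x * y * m1 + y ^ 2 * m2).
Proof.
  intros H0 H1 H2.
  replace (x ^ 2 * m0 + 2 * x * y * m1 + y ^ 2 * m2)
    with (1 * (x ^ 2 * m0 + 2 * x * y * m1) + y ^ 2 * m2) by ring.
  eapply is_series_ext;
    [|exact (is_series_lin2 _ _ _ _ 1 (y ^ 2) (is_series_lin2 _ _ _ _ (x ^ 2) (2 * x * y) H0 H1) H2)].
  intros k. simpl. ring.
Qed.

Section CarryMoments.

Variables b r : nat.
Hypothesis b_gt1 : (1 < b)%nat.
Hypothesis r_le : (r <= b - 1)%nat.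

Let q := / INR b.

Let INR_b_gt1 : 1 < INR b.
Proof. apply lt_1_INR. exact b_gt1. Qed.

Let INR_b_pred : INR (b - 1) = INR b - 1.
Proof. rewrite minus_INR by lia. reflexivity. Qed.

Let q_bounds : 0 < q < 1.
Proof.
  unfold q. split; [apply Rinv_0_lt_compat; lra|].
  rewrite <- Rinv_1. apply Rinv_lt_contravar; lra.
Qed.

Lemma carry_density_S k :
  carry_density b r (S k) = INR r * INR (b - 1) / INR b ^ 2 * q ^ k.
Proof.
  simpl carry_density.
  replace (carry_density b 1 k) with (INR (b - 1) / INR b * q ^ k); [unfold q; field; lra|].
  induction k as [|k IH]; simpl; [ring|].
  rewrite <- IH. unfold q. field. lra.
Qed.

Lemma is_series_carry_moment (e : nat) (M : R) :
  is_series (fun k => INR (S k) ^ e * q ^ k) M ->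
  is_series (fun k => INR k ^ e * carry_density b r k)
    (INR 0 ^ e * carry_density b r 0 + INR r * INR (b - 1) / INR b ^ 2 * M).
Proof.
  intros HM. apply is_series_decr_1.
  replace (plus _ (opp _)) with (INR r * INR (b - 1) / INR b ^ 2 * M)
    by (unfold plus, opp; simpl; ring).
  eapply is_series_ext; [|exact (is_series_scal_l (INR r * INR (b - 1) / INR b ^ 2) _ _ HM)].
  intros k. rewrite carry_density_S. unfold scal; simpl; unfold mult; simpl. ring.
Qed.

Lemma carry_mass : is_series (carry_density b r) 1.
Proof.
  replace 1 with (INR 0 ^ 0 * carry_density b r 0 +
    INR r * INR (b - 1) / INR b ^ 2 * / (1 - q)).
  - eapply is_series_ext; [|apply is_series_carry_moment].
    + intros k. simpl. ring.
    + eapply is_series_ext; [|apply is_series_geom; rewrite Rabs_pos_eq; lra].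
      intros k. simpl. ring.
  - simpl. rewrite minus_INR, INR_b_pred by lia. unfold q. field. lra.
Qed.

Lemma carry_mean : is_series (fun k => INR k * carry_density b r k) (INR r / INR (b - 1)).
Proof.
  replace (INR r / INR (b - 1)) with (INR 0 ^ 1 * carry_density b r 0 +
    INR r * INR (b - 1) / INR b ^ 2 * / (1 - q) ^ 2).
  - eapply is_series_ext; [|apply is_series_carry_moment].
    + intros k. simpl. ring.
    + eapply is_series_ext; [|exact (is_series_geom_succ q q_bounds)].
      intros k. simpl. ring.
  - rewrite INR_b_pred. simpl. unfold q. field. lra.
Qed.

Lemma carry_second_moment :
  is_series (fun k => INR k ^ 2 * carry_density b r k) (INR r * (INR b + 1) / INR (b - 1) ^ 2).
Proof.
  replace (INR r * (INR b + 1) / INR (b - 1) ^ 2) with (INR 0 ^ 2 * carry_density b r 0 +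
    INR r * INR (b - 1) / INR b ^ 2 * ((1 + q) / (1 - q) ^ 3)).
  - exact (is_series_carry_moment 2 _ (is_series_geom_succ_sq q q_bounds)).
  - rewrite INR_b_pred. simpl. unfold q. field. lra.
Qed.

End CarryMoments.

Lemma sumZ_mu b r (h : R -> R) L : (1 < b)%nat -> (r <= b - 1)%nat ->
  is_series (fun k => h (INR r - INR (b - 1) * INR k) * carry_density b r k) L ->
  sumZ (fun d => h (IZR d) * mu b r d) = L.
Proof.
  intros Hb Hr HL. apply (sumZ_lattice _ r (b - 1)); [lia| |].
  - intros d Hd. rewrite (mu_off_lattice b r d Hb Hr Hd). ring.
  - eapply is_series_ext; [|exact HL]. intros k.
    rewrite mu_lattice, minus_IZR, mult_IZR, <- !INR_IZR_INZ by assumption.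
    reflexivity.
Qed.

Lemma meanZ_mu b r : (1 < b)%nat -> (r <= b - 1)%nat -> meanZ (mu b r) = 0.
Proof.
  intros Hb Hr. apply (sumZ_mu b r (fun x => x)); [assumption..|].
  replace 0 with (INR r * 1 + - INR (b - 1) * (INR r / INR (b - 1))).
  - eapply is_series_ext; [|apply is_series_affine_moment; [apply carry_mass | apply carry_mean]];
      try assumption.
    intros k. apply Rmult_eq_compat_r. ring.
  - field. apply not_0_INR. lia.
Qed.

Theorem mainTheorem11 (b r : nat) :
  (2 <= b)%nat -> (r <= b - 1)%nat ->
  varZ (mu b r) = INR r * (1 + INR b - INR r).
Proof.
  intros Hb Hr. unfold varZ. rewrite meanZ_mu by lia.
  apply (sumZ_mu b r (fun x => (x - 0) ^ 2)); [lia | assumption |].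
  replace (INR r * (1 + INR b - INR r)) with (INR r ^ 2 * 1
    + 2 * INR r * - INR (b - 1) * (INR r / INR (b - 1))
    + (- INR (b - 1)) ^ 2 * (INR r * (INR b + 1) / INR (b - 1) ^ 2)).
  - eapply is_series_ext; [|apply is_series_square_moment;
      [apply carry_mass | apply carry_mean | apply carry_second_moment]]; try lia.
    intros k. apply Rmult_eq_compat_r. ring.
  - assert (1 < INR b) by (apply lt_1_INR; lia).
    rewrite minus_INR by lia. simpl. field. lra.
Qed.
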